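(* Consider non-adaptive sensing $\bm{y} = \bm{A}\bm{x} + \bm{z}$, where $\bm{z} \sim \mathcal{N}(0, \bm{I}_{M\times M})$, $\bm{x}\in\mathbb{R}^N$ is an arbitrary one-sparse signal whose single nonzero entry equals $\mu>0$, and $\bm{A} = [A_1 \cdots A_N]$ is a real-valued $M \times N$ sensing matrix with $M = T\log_2(N)$ measurements, where $T \geq 1$ is a constant, whose columns satisfy $\|A_i\|_2 \leq \tau$ for all $i$. Let $\epsilon \in (0,1/2)$ be a target probability of error, and suppose $\tau = \Theta(Q^{-1}(\epsilon)/\mu)$. Then any such non-adaptive sensing matrix achieving probability of error at most $\epsilon$ in reconstructing $\bm{x}$ must have $l_0$ cost $\|\bm{A}\|_{0,0} = \Theta(N\log_2(N))$ as $N\to\infty$.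
   Context: The $l_0$ cost of $\bm{A}$ is $\|\bm{A}\|_{0,0} = \sum_{i=1}^N\sum_{j=1}^M \mathbb{I}(A(j,i)\neq 0)$, the number of nonzero entries. $Q(a) = \frac{1}{\sqrt{2\pi}}\int_a^\infty e^{-b^2/2}\,db$ is the Gaussian tail function and $Q^{-1}$ its inverse. A non-adaptive strategy acquires all measurements at once with a fixed matrix $\bm{A}$. Achieving probability of error $\epsilon$ means the support of $\bm{x}$ (equivalently $\bm{x}$) can be decided from $\bm{y}$ with error probability at most $\epsilon$; in particular, for each pair $i\neq j$ the pairwise error of distinguishing $\mu A_i$ from $\mu A_j$ in unit-variance Gaussian noise must be at most $\epsilon$. $F(N)=\Theta(g(N))$ means $C_1 g(N)\le F(N)\le C_2 g(N)$ for positive constants $C_1,C_2$ and all large $N$. *)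

From HB Require Import structures.
From mathcomp Require Import all_boot all_order all_algebra.
From mathcomp Require Import all_classical all_reals all_analysis.
Set Implicit Arguments. Unset Strict Implicit. Unset Printing Implicit Defensive.
Import Order.TTheory GRing.Theory Num.Theory.
Import numFieldNormedType.Exports.
Local Open Scope classical_set_scope.
Local Open Scope ring_scope.

Section Defs.
Variable R : realType.

Definition Qfun (a : R) : R :=
  (Num.sqrt (2 * pi))^-1 *
  fine (\int[@lebesgue_measure R]_(b in `]a, +oo[%classic) (expR (- (b ^+ 2) / 2))%:E)%E.

Definition Qinv (e : R) : R := xget 0 [set q | Qfun q = e].

Definition norm2 (M : nat) (u : 'cV[R]_M) : R :=
  Num.sqrt (\sum_(k < M) u k ord0 ^+ 2).

Definition column (M N : nat) (A : 'M[R]_(M, N)) (i : 'I_N) : 'cV[R]_M := col i A.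

(* Error probability of the optimal (ML) binary test between mu*u and mu*v
   observed in N(0, I) noise: Q(mu * ||u - v||_2 / 2). *)
Definition pairwise_err (M : nat) (mu : R) (u v : 'cV[R]_M) : R :=
  Qfun (mu * norm2 (u - v) / 2).

Definition l0_cost (M N : nat) (A : 'M[R]_(M, N)) : nat :=
  #|[set ij : 'I_M * 'I_N | A ij.1 ij.2 != 0]|.

Definition log2 (x : R) : R := ln x / ln 2.

End Defs.

From HB Require Import structures.
From mathcomp Require Import all_boot all_order all_algebra.
From mathcomp Require Import all_classical all_reals all_analysis.
From mathcomp Require Import measurable_realfun.
From mathcomp Require Import ring lra zify.
Set Implicit Arguments.
Unset Strict Implicit.
Unset Printing Implicit Defensive.
Import Order.TTheory GRing.Theory Num.Theory.
Import numFieldNormedType.Exports.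
Local Open Scope ring_scope.
Local Open Scope classical_set_scope.

(* If every pair of columns is told apart with error at most eps = Q(q),
   then, Q being strictly decreasing, the columns are pairwise at distance at
   least D = 2q/mu, while their norms are at most (c2/2) D.  Quantizing the
   columns with at most s nonzero entries on a grid of step D/(2 sqrt s) is
   injective on them, and lands in the integer vectors of l1-norm at most K s
   for a constant K; there are at most C(K s + 2M, K s) of those.  For
   s ~ a log2 N with a small enough this is at most N/2, so at least N/2
   columns have more than s nonzero entries and ||A||_{0,0} >= (a/2) N log2 N.
   The upper bound is ||A||_{0,0} <= M N. *)

Section GaussianTail.
Variable R : realType.
Local Notation leb := (@lebesgue_measure R).
Local Notation phi := (normal_pdf (0 : R) 1).

Lemma sqrt2pi_gt0 : 0 < Num.sqrt (2 * pi) :> R.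
Proof. by rewrite sqrtr_gt0 mulr_gt0 // pi_gt0. Qed.

Lemma normal_pdf01E x : phi x = (Num.sqrt (2 * pi))^-1 * expR (- (x ^+ 2) / 2).
Proof.
rewrite /normal_pdf oner_eq0 /= /normal_peak /normal_fun subr0 expr1n mul1r.
by rewrite -mulr_natl mulrC.
Qed.

Lemma measurable_phi (A : set R) : measurable_fun A (fun x => (phi x)%:E).
Proof. by apply/measurable_EFinP/measurable_funTS; exact: measurable_normal_pdf. Qed.

Lemma integral_phi_ge0 (A : set R) : (0 <= \int[leb]_(x in A) (phi x)%:E)%E.
Proof. by apply: integral_ge0 => x _; rewrite lee_fin normal_pdf_ge0. Qed.

Lemma integral_phi_le1 (A : set R) : measurable A -> (\int[leb]_(x in A) (phi x)%:E <= 1)%E.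
Proof.
move=> mA; rewrite -(integral_normal_pdf 0 1); apply: ge0_subset_integral => //.
- exact: measurable_phi.
- by move=> x _; rewrite lee_fin normal_pdf_ge0.
Qed.

Lemma integral_phi_fin (A : set R) : measurable A ->
  (\int[leb]_(x in A) (phi x)%:E)%E \is a fin_num.
Proof.
move=> mA; rewrite ge0_fin_numE ?integral_phi_ge0 //.
by rewrite (le_lt_trans (integral_phi_le1 mA)) // ltry.
Qed.

Lemma QfunE a : Qfun a = fine (\int[leb]_(x in `]a, +oo[) (phi x)%:E)%E.
Proof.
under [in RHS]eq_integral do rewrite normal_pdf01E EFinM.
rewrite ge0_integralZl_EFin //; last first.
  apply/measurable_EFinP/measurable_funTS; apply: measurableT_comp => //.
  by apply: measurable_funM => //; apply: measurableT_comp => //; exact: measurable_funX.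
rewrite /Qfun; case: (\int[_]_(x in _) _)%E => [r| |] //=.
- by rewrite muleC gt0_mulye ?lte_fin ?invr_gt0 ?sqrt2pi_gt0 ?mulr0.
- by rewrite muleC gt0_mulNye ?lte_fin ?invr_gt0 ?sqrt2pi_gt0 ?mulr0.
Qed.

Lemma Qfun0 : Qfun (0 : R) = 1 / 2.
Proof.
have phiN : phi =1 phi \o -%R by move=> x; rewrite /= !normal_pdf01E sqrrN.
have := ge0_symfun_integralT (@normal_pdf_ge0 _ 0 1)
  (continuous_normal_pdf (oner_neq0 R)) phiN.
rewrite integral_normal_pdf.
have -> : [set x : R | 0 <= x] = `[0, +oo[.
  by apply/seteqP; split => x /=; rewrite in_itv /= andbT.
rewrite -integral_itv_obnd_cbnd; last exact: measurable_phi.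
rewrite QfunE; have := @integral_phi_fin `]0, +oo[%classic (measurable_itv _).
by case: (\int[_]_(x in _) _)%E => // r _ /eqP; rewrite eqe => /eqP /= r_half; lra.
Qed.

Lemma Qfun_decr : {homo @Qfun R : x y /~ x < y}.
Proof.
move=> q x xq; rewrite !QfunE.
have mid_gt0 : (0 < \int[leb]_(y in `]x, q]) (phi y)%:E)%E.
  pose c := (Num.sqrt (2 * pi))^-1 * expR (- (x ^+ 2 + q ^+ 2) / 2).
  have c_gt0 : 0 < c by rewrite mulr_gt0 ?expR_gt0 ?invr_gt0 ?sqrt2pi_gt0.
  apply: (@lt_le_trans _ _ (\int[leb]_(y in `]x, q]) (cst c%:E y))%E).
    rewrite integral_cst //= lebesgue_measure_itv /= lte_fin xq -EFinD -EFinM.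
    by rewrite lte_fin mulr_gt0 // subr_gt0.
  apply: ge0_le_integral => //.
  - by move=> ? _; rewrite lee_fin ltW.
  - exact: measurable_phi.
  move=> y; rewrite /= in_itv /= => /andP[xy yq].
  rewrite lee_fin normal_pdf01E ler_pM2l ?invr_gt0 ?sqrt2pi_gt0 // ler_expR.
  by rewrite ler_pM2r // lerN2; have [y0|y0] := leP 0 y; nra.
have -> : `]x, +oo[ = `]x, q] `|` `]q, +oo[ :> set R.
  by rewrite -itv_bndbnd_setU // bnd_simp ltW.
rewrite ge0_integral_setU //; last 3 first.
- exact: measurable_phi.
- by move=> y _; rewrite lee_fin normal_pdf_ge0.
- apply/disj_setPS => y [] /=; rewrite !in_itv /= andbT => /andP[_ yq] qy.
  by move: (le_lt_trans yq qy); rewrite ltxx.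
have [fin_mid fin_tail] := (integral_phi_fin (measurable_itv `]x, q]%O),
                            integral_phi_fin (measurable_itv `]q, +oo[%O)).
by rewrite (fineD fin_mid fin_tail) ltrDr -lte_fin fineK.
Qed.

Lemma ler_Qfun : {mono @Qfun R : x y /~ x <= y}.
Proof. exact: le_nmono Qfun_decr. Qed.

(* [Qinv e] is the junk value [0] when [e] has no preimage. *)
Lemma QinvK (e : R) : Qinv e != 0 -> Qfun (Qinv e) = e.
Proof. by rewrite /Qinv; case: xgetP => [x _ Px _ | _]; rewrite ?eqxx. Qed.

End GaussianTail.

Local Close Scope classical_set_scope.

Section Columns.
Variables (R : realType) (M N : nat).

Lemma sqr_norm2 (u : 'cV[R]_M) : norm2 u ^+ 2 = \sum_(k < M) u k ord0 ^+ 2.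
Proof. by rewrite sqr_sqrtr // sumr_ge0 // => k _; exact: sqr_ge0. Qed.

Lemma norm2_le0 (u : 'cV[R]_M) : norm2 u <= 0 -> u = 0.
Proof.
move=> u_le0; have u0 : norm2 u = 0 by apply/eqP; rewrite eq_le u_le0 sqrtr_ge0.
have sum0 : \sum_(k < M) u k ord0 ^+ 2 = 0 by rewrite -sqr_norm2 u0 expr0n.
apply/matrixP => k j; rewrite (ord1 j) mxE; apply/eqP; rewrite -sqrf_eq0.
by apply/eqP; apply: (psumr_eq0P _ sum0) => // i _; exact: sqr_ge0.
Qed.

Lemma pairwise_err_refl (mu : R) (u : 'cV[R]_M) : pairwise_err mu u u = 1 / 2.
Proof.
rewrite /pairwise_err subrr /norm2 big1 ?sqrtr0 ?mulr0 ?mul0r ?Qfun0 // => k _.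
by rewrite mxE expr0n.
Qed.

Lemma sep_of_pairwise_err (mu q : R) (u v : 'cV[R]_M) : 0 < mu ->
  pairwise_err mu u v <= Qfun q -> 2 * q / mu <= norm2 (u - v).
Proof.
by move=> mu_gt0; rewrite /pairwise_err ler_Qfun ler_pdivrMr //; lra.
Qed.

Variable A : 'M[R]_(M, N).

Lemma sqr_norm2_col i : norm2 (column A i) ^+ 2 = \sum_(k < M) A k i ^+ 2.
Proof. by rewrite sqr_norm2; apply: eq_bigr => k _; rewrite mxE. Qed.

Lemma sqr_norm2_colB i j :
  norm2 (column A i - column A j) ^+ 2 = \sum_(k < M) (A k i - A k j) ^+ 2.
Proof. by rewrite sqr_norm2; apply: eq_bigr => k _; rewrite !mxE. Qed.

Lemma col_norm_bound_gt0 (mu eps tau : R) : (1 < N)%N -> eps < 1 / 2 ->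
  (forall i, norm2 (column A i) <= tau) ->
  (forall i j, i != j -> pairwise_err mu (column A i) (column A j) <= eps) ->
  0 < tau.
Proof.
move=> N_gt1 eps_lt col_le pair_le; rewrite ltNge; apply/negP => tau_le0.
have col0 i : column A i = 0 by apply: norm2_le0; exact: le_trans (col_le i) tau_le0.
pose i0 : 'I_N := Ordinal (ltnW N_gt1); pose i1 : 'I_N := Ordinal N_gt1.
by have := pair_le i0 i1 isT; rewrite !col0 pairwise_err_refl; lra.
Qed.

End Columns.

Section L0Cost.
Variables (R : realType) (M N : nat) (A : 'M[R]_(M, N)).

Definition col_nnz (i : 'I_N) : nat := #|[set k | A k i != 0]|.

Lemma l0_cost_sum : l0_cost A = (\sum_(i < N) col_nnz i)%N.
Proof.
rewrite /l0_cost (@eq_card _ _ [set ij : 'I_M * 'I_N | A ij.1 ij.2 != 0]); last first.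
  by move=> ij; rewrite inE; apply/idP/idP; rewrite in_setE.
rewrite -sum1dep_card.
rewrite -(pair_big_dep xpredT (fun k i => A k i != 0) (fun _ _ => 1%N)) /=.
rewrite (exchange_big_dep xpredT) //=.
by apply: eq_bigr => i _; rewrite sum1dep_card.
Qed.

Lemma l0_cost_le_mul : (l0_cost A <= M * N)%N.
Proof. by rewrite /l0_cost (leq_trans (max_card _)) // card_prod !card_ord. Qed.

Lemma l0_cost_ge_dense s :
  ((N - #|[set i | (col_nnz i <= s)%N]|) * s.+1 <= l0_cost A)%N.
Proof.
set B := [set i | (col_nnz i <= s)%N].
have -> : (N - #|B|)%N = #|~: B| by rewrite -[N in (N - _)%N]card_ord -(cardsC B) addKn.
rewrite l0_cost_sum -sum_nat_const big_mkcond /=; apply: leq_sum => i _.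
by rewrite !inE -ltnNge; case: ltnP.
Qed.

End L0Cost.

Lemma floor_eq_dist_lt1 (R : realType) (x y : R) :
  Num.floor x = Num.floor y -> `|x - y| < 1.
Proof.
move=> floor_xy; have := floor_le x; have := floorD1_gt x.
have := floor_le y; have := floorD1_gt y; rewrite floor_xy intrD.
by rewrite ltr_norml; move=> *; apply/andP; split; lra.
Qed.

Lemma abs_floor_le_sqr (R : realType) (t : R) :
  (`|Num.floor t|%N)%:R <= (t ^+ 2 + 3) / 2 :> R.
Proof.
rewrite natr_absz intr_norm ler_norml; have := floor_le t; have := floorD1_gt t.
rewrite intrD => *; have := sqr_ge0 (t - 1); have := sqr_ge0 (t + 1).
by move=> *; apply/andP; split; nra.
Qed.

(* An integer vector of l1-norm at most L is encoded by the 2n-tuple of its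
   positive and negative parts, a tuple of naturals of sum at most L. *)
Lemma card_inj_l1_ball (I : finType) (B : {set I}) (n L : nat) (z : I -> 'I_n -> int) :
  (forall i j, i \in B -> j \in B -> z i =1 z j -> i = j) ->
  (forall i, i \in B -> (\sum_(k < n) `|z i k| <= L)%N) ->
  (#|B| <= 'C(L + (n + n), L))%N.
Proof.
move=> z_inj z_l1.
pose pos (x : int) : nat := if x is Posz m then m else 0.
pose neg (x : int) : nat := if x is Negz m then m.+1 else 0.
have posDneg x : (pos x + neg x)%N = `|x|%N by case: x => m; rewrite /= ?addn0.
have pos_neg_inj x y : pos x = pos y -> neg x = neg y -> x = y.
  by case: x => m; case: y => m' /=; lia.
have bounded i k : i \in B -> (pos (z i k) <= L)%N /\ (neg (z i k) <= L)%N.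
  move=> iB; have := z_l1 i iB; rewrite (bigD1 k) //= -posDneg => le_L.
  by split; lia.
pose code i : (n + n).-tuple 'I_L.+1 := [tuple of
  mktuple (fun k => inord (pos (z i k))) ++ mktuple (fun k => inord (neg (z i k)))].
have code_inj : {in B &, injective code}.
  move=> i j iB jB eq_code; apply: z_inj => // k.
  have := congr1 (fun t => val (tnth t (lshift n k))) eq_code.
  have := congr1 (fun t => val (tnth t (rshift n k))) eq_code.
  rewrite /= !tnth_lshift !tnth_rshift !tnth_mktuple.
  have [[pi ni] [pj nj]] := (bounded i k iB, bounded j k jB).
  by rewrite !inordK ?ltnS // => eq_neg eq_pos; exact: pos_neg_inj.
have code_sum i : i \in B -> (\sum_(x <- code i) x <= L)%N.
  move=> iB; rewrite big_cat /= !big_map -!enumT !big_enum -big_split /=.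
  apply: leq_trans (z_l1 i iB); apply/eq_leq/eq_bigr => k _.
  by have [pk nk] := bounded i k iB; rewrite !inordK ?ltnS // posDneg.
have -> : 'C(L + (n + n), L) = 'C(n + n + L, n + n).
  by rewrite [in RHS]addnC -[in RHS]bin_sub ?leq_addl // addnK.
rewrite -(card_in_imset code_inj) -card_partial_ord_partitions; apply: subset_leq_card.
by apply/fintype.subsetP => _ /imsetP[i iB ->]; rewrite inE code_sum.
Qed.

Section SparseColumns.
Variables (R : realType) (M N : nat) (A : 'M[R]_(M, N)) (D r : R) (s K : nat).
Hypotheses (D_gt0 : 0 < D) (s_gt0 : (0 < s)%N) (K_ge : 2 * r ^+ 2 + 3 / 2 <= K%:R).
Hypothesis col_norm : forall i, norm2 (column A i) <= r * D.
Hypothesis col_sep : forall i j, i != j -> D <= norm2 (column A i - column A j).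

(* Two distinct columns with at most s nonzero entries differ in at most 2s
   coordinates; with the same quantization of step h each difference is below
   h, so their squared distance would be below 2 s h^2 = D^2 / 2. *)
Let h := D / (2 * Num.sqrt s%:R).

Let h_gt0 : 0 < h.
Proof. by rewrite divr_gt0 // mulr_gt0 // sqrtr_gt0 ltr0n. Qed.

Let sqr_h : h ^+ 2 * (4 * s%:R) = D ^+ 2.
Proof.
have s_neq0 : s%:R != 0 :> R by rewrite pnatr_eq0 -lt0n.
by rewrite expr_div_n exprMn sqr_sqrtr ?ler0n //; field.
Qed.

Let quantize i k : int := Num.floor (A k i / h).

Let col_nnzE i : (col_nnz A i)%:R = \sum_(k < M) ((A k i != 0)%:R : R).
Proof.
rewrite /col_nnz -sum1_card natr_sum big_mkcond /=; apply: eq_bigr => k _.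
by rewrite inE; case: (A k i != 0).
Qed.

Let quantize_inj i j : (col_nnz A i <= s)%N -> (col_nnz A j <= s)%N ->
  quantize i =1 quantize j -> i = j.
Proof.
move=> si sj eq_q; apply/eqP; apply: contraT => neq_ij.
have sep : D ^+ 2 <= \sum_(k < M) (A k i - A k j) ^+ 2.
  by rewrite -sqr_norm2_colB; apply: lerXn2r; rewrite ?nnegrE ?sqrtr_ge0 ?(ltW D_gt0) ?col_sep.
have termwise k : (A k i - A k j) ^+ 2 <= ((A k i != 0)%:R + (A k j != 0)%:R) * h ^+ 2.
  have := floor_eq_dist_lt1 (eq_q k).
  rewrite -mulrBl normrM normfV (gtr0_norm h_gt0) ltr_pdivrMr // mul1r ltr_norml.
  case/andP => lo hi; have close2 : (A k i - A k j) ^+ 2 <= h ^+ 2 by nra.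
  have [zi|_] := eqVneq (A k i) 0; have [zj|_] := eqVneq (A k j) 0 => /=.
  - by rewrite zi zj subrr expr0n addr0 mul0r.
  - by rewrite add0r mul1r.
  - by rewrite addr0 mul1r.
  - by apply: le_trans close2 _; rewrite ler_peMl ?sqr_ge0 // lerDl.
have := le_trans sep (ler_sum _ (fun k _ => termwise k)).
rewrite -mulr_suml big_split /= -!col_nnzE -sqr_h.
have : (col_nnz A i + col_nnz A j)%:R <= 2 * s%:R :> R by rewrite -natrM ler_nat; lia.
have : 0 < s%:R :> R by rewrite ltr0n.
rewrite natrD => s_pos nnz_le; have := exprn_gt0 2 h_gt0; nra.
Qed.

Let quantize_l1 i : (col_nnz A i <= s)%N -> (\sum_(k < M) `|quantize i k| <= K * s)%N.
Proof.
move=> si; rewrite -(ler_nat R) natr_sum natrM.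
have termwise k : (`|quantize i k|%N)%:R <=
    A k i ^+ 2 / (2 * h ^+ 2) + (A k i != 0)%:R * (3 / 2) :> R.
  have [zi|_] := eqVneq (A k i) 0.
    by rewrite /quantize zi mul0r floor0 expr0n /= !mul0r addr0.
  rewrite /= mul1r (_ : _ + _ = ((A k i / h) ^+ 2 + 3) / 2) ?abs_floor_le_sqr //.
  by field; rewrite gt_eqF.
apply: le_trans (ler_sum _ (fun k _ => termwise k)) _.
rewrite big_split /= -!mulr_suml -col_nnzE.
have col_sqr_le : \sum_(k < M) A k i ^+ 2 <= (r * D) ^+ 2.
  rewrite -sqr_norm2_col; apply: lerXn2r; rewrite ?nnegrE ?sqrtr_ge0 ?col_norm //.
  exact: le_trans (sqrtr_ge0 _) (col_norm i).
have : (\sum_(k < M) A k i ^+ 2) / (2 * h ^+ 2) <= 2 * r ^+ 2 * s%:R.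
  rewrite ler_pdivrMr; last by rewrite mulr_gt0 ?exprn_gt0.
  suff -> : 2 * r ^+ 2 * s%:R * (2 * h ^+ 2) = (r * D) ^+ 2 by [].
  by rewrite [(r * D) ^+ 2]exprMn -sqr_h; ring.
have : (col_nnz A i)%:R <= s%:R :> R by rewrite ler_nat.
have := ler_wpM2r (ler0n R s) K_ge; lra.
Qed.

Lemma card_sparse_cols :
  (#|[set i | (col_nnz A i <= s)%N]| <= 'C(K * s + (M + M), K * s))%N.
Proof.
apply: (card_inj_l1_ball (z := quantize)) => [i j|i]; rewrite !inE.
  exact: quantize_inj.
exact: quantize_l1.
Qed.

End SparseColumns.

Lemma bin_le_expR (R : realType) (x : R) n k : 0 < x ->
  'C(n, k)%:R <= expR (n%:R * x + k%:R * ln x^-1).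
Proof.
move=> x_gt0; rewrite expRD expRM_natl [X in _ * X]expRM_natl lnK ?posrE ?invr_gt0 //.
rewrite -ler_pdivrMr ?exprn_gt0 ?invr_gt0 // exprVn invrK.
have [kn|nk] := leqP k n; last first.
  by rewrite bin_small // mul0r exprn_ge0 ?expR_ge0.
apply: le_trans (_ : (x + 1) ^+ n <= _); last first.
  have := expR_ge1Dx x; rewrite addrC => x1_le.
  by apply: lerXn2r; rewrite // nnegrE ?expR_ge0 // addr_ge0 // ltW.
rewrite exprD1n (bigD1 (Ordinal (kn : (k < n.+1)%N))) //= mulr_natl lerDl.
by apply: sumr_ge0 => i _; rewrite mulrn_wge0 // exprn_ge0 // ltW.
Qed.

Lemma ln2_gt0 (R : realType) : 0 < ln (2 : R).
Proof. by rewrite ln_gt0 // ltr1n. Qed.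

Lemma ln2_le1 (R : realType) : ln (2 : R) <= 1.
Proof.
rewrite -[leRHS](expRK 1) ler_ln ?posrE ?expR_gt0 //.
by have := expR_ge1Dx (1 : R); rewrite [1 + 1]/2.
Qed.

Lemma log2_mul_ln2 (R : realType) (x : R) : log2 x * ln 2 = ln x.
Proof. by rewrite /log2 divfK // gt_eqF // ln2_gt0. Qed.

Section SparsityRate.
Variables (R : realType) (T : R) (K : nat).
Hypotheses (T_ge1 : 1 <= T) (K_gt0 : (0 < K)%N).

(* [bin_le_expR] is used at [x], for which (K + 2T) x = ln 2 / 4; the rate
   then makes K s ln x^-1 <= (ln N) / 4 when s <= sparsity_rate * log2 N. *)
Let x := ln 2 / (4 * (K%:R + 2 * T)).
Let u := ln x^-1.

Let K_ge1 : 1 <= K%:R :> R. Proof. by rewrite ler1n. Qed.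

Let x_gt0 : 0 < x.
Proof. by rewrite divr_gt0 ?ln2_gt0 //; have := K_ge1; have := T_ge1; lra. Qed.

Let x_le : x <= 1 / 12.
Proof.
have K1 := K_ge1; have T1 := T_ge1; have ln2_le := ln2_le1 R.
by rewrite ler_pdivrMr; lra.
Qed.

Let u_ge : ln 2 <= u.
Proof.
rewrite ler_ln ?posrE ?invr_gt0 //.
rewrite -(@ler_pM2r _ x) // mulVf ?gt_eqF //; have := x_le; lra.
Qed.

Definition sparsity_rate : R := ln 2 / (4 * K%:R * u).

Lemma sparsity_rate_gt0 : 0 < sparsity_rate.
Proof. by rewrite divr_gt0 ?ln2_gt0 // !mulr_gt0 ?ltr0n // (lt_le_trans (ln2_gt0 R)). Qed.

Lemma bin_le_half N M s : 3 <= ln (N%:R : R) ->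
  M%:R < T * log2 (N%:R : R) + 1 -> s%:R <= sparsity_rate * log2 (N%:R : R) ->
  'C(K * s + (M + M), K * s)%:R <= N%:R / 2 :> R.
Proof.
move=> lnN_ge3 M_lt s_le; apply: le_trans (bin_le_expR _ _ x_gt0) _.
have N_gt0 : 0 < N%:R :> R.
  by rewrite ltr0n lt0n; apply/eqP => N0; move: lnN_ge3; rewrite N0 ln0; lra.
have -> : N%:R / 2 = expR (ln N%:R - ln 2) :> R by rewrite expRB !lnK ?posrE.
rewrite ler_expR.
have lnNE := log2_mul_ln2 (N%:R : R).
rewrite -lnNE natrD !natrM natrD; rewrite -lnNE in lnN_ge3.
move: lnN_ge3 M_lt s_le lnNE; set l := log2 _ => lnN_ge3 M_lt s_le _; clearbody l.
have K1 := K_ge1; have T1 := T_ge1; have x_le1 := x_le; have u_ge2 := u_ge.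
have ln2_pos := ln2_gt0 R; have ln2_le := ln2_le1 R.
have l_ge0 : 0 <= l by nra.
have Kx : (K%:R + 2 * T) * x = ln 2 / 4 by rewrite /x; field; lra.
have Kr : K%:R * sparsity_rate * u = ln 2 / 4.
  by rewrite /sparsity_rate; field; rewrite !gt_eqF //; lra.
have u_gt0 : 0 < u by lra.
have Ks_u : K%:R * s%:R * u <= l * ln 2 / 4.
  have := ler_wpM2l (mulr_ge0 (ler0n R K) (ltW u_gt0)) s_le.
  have -> : K%:R * u * (sparsity_rate * l) = l * ln 2 / 4.
    by transitivity (K%:R * sparsity_rate * u * l); [ring | rewrite Kr; ring].
  by rewrite mulrAC.
have Ks_le : K%:R * s%:R <= l / 4.
  have Kr_le : K%:R * sparsity_rate <= 1 / 4 by rewrite -(ler_pM2r u_gt0) Kr; lra.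
  have := ler_wpM2l (ler0n R K) s_le; have := ler_wpM2r l_ge0 Kr_le.
  lra.
have nx : (K%:R * s%:R + (M%:R + M%:R)) * x <= l * ln 2 / 4 + 2 * x.
  have n_le : K%:R * s%:R + (M%:R + M%:R) <= (K%:R + 2 * T) * l + 2.
    have := ler_wpM2r l_ge0 K1; rewrite mul1r; lra.
  apply: le_trans (ler_wpM2r (ltW x_gt0) n_le) _.
  suff -> : ((K%:R + 2 * T) * l + 2) * x = l * ln 2 / 4 + 2 * x by [].
  by transitivity ((K%:R + 2 * T) * x * l + 2 * x); [ring | rewrite Kx; ring].
by rewrite -/u; lra.
Qed.

End SparsityRate.

Lemma l0_cost_ge_sparsity (R : realType) (T r D : R) (K M N : nat) (A : 'M[R]_(M, N)) :
  1 <= T -> (0 < K)%N -> 2 * r ^+ 2 + 3 / 2 <= K%:R -> 0 < D ->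
  3 + ln 2 / sparsity_rate T K < ln (N%:R : R) -> M%:R < T * log2 (N%:R : R) + 1 ->
  (forall i, norm2 (column A i) <= r * D) ->
  (forall i j, i != j -> D <= norm2 (column A i - column A j)) ->
  sparsity_rate T K / 2 * (N%:R * log2 (N%:R : R)) <= (l0_cost A)%:R.
Proof.
move=> T_ge1 K_gt0 K_ge D_gt0 lnN_gt M_lt col_norm col_sep.
have a_gt0 := sparsity_rate_gt0 T_ge1 K_gt0.
move: lnN_gt M_lt; set a := sparsity_rate T K; set l := log2 _ => lnN_gt M_lt.
have al_gt1 : 1 < a * l.
  have := log2_mul_ln2 (N%:R : R); rewrite -/l => lnNE.
  have : ln 2 / a < l * ln 2 by rewrite lnNE; lra.
  by rewrite ltr_pdivrMr // mulrAC ltr_pMl ?ln2_gt0 // mulrC.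
set s := Num.truncn (a * l).
have s_le : s%:R <= a * l by rewrite truncn_le ltW // (lt_trans ltr01).
have s_gt : a * l < s.+1%:R := truncnS_gt _.
have s_gt0 : (0 < s)%N by rewrite -(ltr_nat R); move: s_gt; rewrite -addn1 natrD; lra.
have lnN_ge3 : 3 <= ln (N%:R : R).
  by apply: ltW; apply: le_lt_trans lnN_gt; rewrite lerDl divr_ge0 ?ltW ?ln2_gt0.
have sparse_le := card_sparse_cols D_gt0 s_gt0 K_ge col_norm col_sep.
have bin := bin_le_half T_ge1 K_gt0 lnN_ge3 M_lt s_le.
have dense := l0_cost_ge_dense A s.
move: sparse_le dense; set B := #|_| => sparse_le dense.
have B_le : B%:R <= N%:R / 2 :> R by apply: le_trans bin; rewrite ler_nat.
have B_leN : (B <= N)%N by rewrite -[N]card_ord max_card.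
move: dense; rewrite -(ler_nat R) natrM natrB //; apply: le_trans.
rewrite (_ : _ * _ = N%:R / 2 * (a * l)); last by ring.
apply: ler_pM; [by rewrite divr_ge0 | lra | lra | exact: ltW].
Qed.

Lemma l0_cost_le_log (R : realType) (T : R) M N (A : 'M[R]_(M, N)) :
  (1 < N)%N -> M%:R < T * log2 (N%:R : R) + 1 ->
  (l0_cost A)%:R <= (T + 1) * (N%:R * log2 (N%:R : R)).
Proof.
move=> N_gt1 M_lt; have l_ge1 : 1 <= log2 (N%:R : R).
  rewrite /log2 ler_pdivlMr ?ln2_gt0 // mul1r ler_ln ?posrE ?ltr0n ?ler_nat //.
  exact: ltnW.
apply: le_trans (_ : (M * N)%:R <= _); first by rewrite ler_nat l0_cost_le_mul.
by rewrite natrM [_ * (N%:R * _)]mulrCA [M%:R * _]mulrC ler_wpM2l //; lra.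
Qed.

Lemma gt1_of_ln_gt0 (R : realType) (x : R) : 0 < ln x -> 1 < x.
Proof. by apply: contraTT; rewrite -!leNgt; exact: ln_le0. Qed.

Lemma truncn_expR_lt_ln (R : realType) (b : R) N :
  (Num.truncn (expR b) < N)%N -> b < ln (N%:R : R).
Proof.
move=> lt_N; have eN : expR b < N%:R by apply: lt_le_trans (truncnS_gt _) _; rewrite ler_nat.
by rewrite -[b]expRK ltr_ln ?posrE ?expR_gt0 // (lt_trans (expR_gt0 b)).
Qed.

Theorem theorem2 (R : realType) (T c1 c2 : R) :
  1 <= T -> 0 < c1 -> 0 < c2 ->
  exists C1 C2 : R, exists N0 : nat,
    0 < C1 /\ 0 < C2 /\
    forall (eps mu tau : R),
      0 < eps -> eps < 1 / 2 -> 0 < mu ->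
      c1 * (Qinv eps / mu) <= tau -> tau <= c2 * (Qinv eps / mu) ->
      forall (N M : nat) (A : 'M[R]_(M, N)),
        (N0 <= N)%N ->
        T * log2 (N%:R : R) <= M%:R -> M%:R < T * log2 (N%:R : R) + 1 ->
        (forall i : 'I_N, norm2 (column A i) <= tau) ->
        (forall i j : 'I_N, i != j -> pairwise_err mu (column A i) (column A j) <= eps) ->
        C1 * (N%:R * log2 (N%:R : R)) <= (l0_cost A)%:R /\
        (l0_cost A)%:R <= C2 * (N%:R * log2 (N%:R : R)).
Proof.
move=> T_ge1 _ c2_gt0.
pose K := (Num.truncn (c2 ^+ 2 / 2 + 3 / 2)).+1.
have K_ge : 2 * (c2 / 2) ^+ 2 + 3 / 2 <= K%:R.
  by rewrite (_ : 2 * _ = c2 ^+ 2 / 2); [exact/ltW/truncnS_gt | field].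
pose a := sparsity_rate T K; have a_gt0 : 0 < a := sparsity_rate_gt0 T_ge1 (ltn0Sn _).
exists (a / 2), (T + 1), (Num.truncn (expR (3 + ln 2 / a))).+1.
split; [by rewrite divr_gt0 | split; [lra | ]].
(* The lower bound on tau. *)
move=> eps mu tau _ eps_lt mu_gt0 _ tau_le N M A N_ge _ M_lt col_le pair_le.
have lnN_gt : 3 + ln 2 / a < ln (N%:R : R) by apply: truncn_expR_lt_ln.
have N_gt1 : (1 < N)%N.
  have := divr_gt0 (ln2_gt0 R) a_gt0.
  by rewrite -(ltr_nat R) => ?; apply: gt1_of_ln_gt0; lra.
split; last exact: l0_cost_le_log.
have q_gt0 : 0 < Qinv eps.
  have := lt_le_trans (col_norm_bound_gt0 N_gt1 eps_lt col_le pair_le) tau_le.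
  by rewrite pmulr_rgt0 // pmulr_lgt0 // invr_gt0.
have Qq : Qfun (Qinv eps) = eps by apply: QinvK; rewrite gt_eqF.
have rD : c2 / 2 * (2 * Qinv eps / mu) = c2 * (Qinv eps / mu).
  by field; rewrite gt_eqF.
apply: (l0_cost_ge_sparsity (r := c2 / 2) (D := 2 * Qinv eps / mu)) => //.
- by rewrite divr_gt0 // mulr_gt0.
- by move=> i; rewrite rD (le_trans (col_le i)).
- by move=> i j /pair_le err_le; apply: sep_of_pairwise_err; rewrite ?Qq.
Qed.
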